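(* For every positive integer $m$, the line graph $L(K_{2m+1})$ of the complete graph on $2m+1$ vertices is a core, i.e. every endomorphism of $L(K_{2m+1})$ is an automorphism.
   Context: An endomorphism of a graph $X$ is a map $f:V(X)\to V(X)$ such that adjacent vertices are mapped to adjacent vertices; $X$ is a core if all its endomorphisms are automorphisms. *)

From mathcomp Require Import all_boot.
Set Implicit Arguments. Unset Strict Implicit. Unset Printing Implicit Defensive.

Definition is_endomorphism (V : finType) (adj : rel V) (f : V -> V) : Prop :=
  forall x y, adj x y -> adj (f x) (f y).

Definition is_automorphism (V : finType) (adj : rel V) (f : V -> V) : Prop :=
  bijective f /\ forall x y, adj (f x) (f y) = adj x y.

Definition is_core (V : finType) (adj : rel V) : Prop :=
  forall f : V -> V, is_endomorphism adj f -> is_automorphism adj f.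

(* Vertices of the line graph L(K_n): the edges of K_n, i.e. the
   2-element subsets of the vertex set 'I_n. *)
Definition edgeK (n : nat) := {e : {set 'I_n} | #|e| == 2}.

Definition lineK_adj (n : nat) : rel (edgeK n) :=
  fun e f => (e != f) && ~~ [disjoint val e & val f].

From mathcomp Require Import all_boot.
Set Implicit Arguments. Unset Strict Implicit. Unset Printing Implicit Defensive.

(* An injective endomorphism of a finite graph permutes its arcs, hence is an
   automorphism, so it suffices to show that an endomorphism f of L(K_n), n odd,
   is injective.  If f identifies two edges, they are disjoint, so n >= 5.  The
   star of a vertex x (the n - 1 edges through x) is a clique on which f is
   injective, and a clique of more than three edges of L(K_n) lies in a star, so
   f maps star x onto some star(s x).  The four endpoints of the two identified
   edges are sent by s into a single edge, so s is not injective, and then s is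
   constant: if s u = s v with u <> v and s x <> s u, the adjacent edges ux and
   vx would both be mapped to the edge {s u, s x}.  Hence every fibre of f meets
   every star, i.e. is a perfect matching of K_n, impossible for odd n. *)

Lemma inj_endomorphism_automorphism (V : finType) (adj : rel V) (f : V -> V) :
  is_endomorphism adj f -> injective f -> is_automorphism adj f.
Proof.
move=> f_endo f_inj; split=> [|x y]; first exact: injF_bij.
apply/idP/idP=> [adj_fxy|]; last exact: f_endo.
pose E := [set p : V * V | adj p.1 p.2].
pose F (p : V * V) := (f p.1, f p.2).
have F_inj : injective F by move=> [? ?] [? ?] [/f_inj -> /f_inj ->].
have FE_sub : F @: E \subset E.
  by apply/subsetP=> _ /imsetP[p + ->]; rewrite !inE /=; apply: f_endo.
(* [F] permutes the finite set of arcs, so it also reflects them. *)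
have FE : F @: E = E.
  by apply/eqP; rewrite eqEcard FE_sub (card_imset _ F_inj) leqnn.
have : F (x, y) \in F @: E by rewrite FE inE.
by rewrite mem_imset // inE.
Qed.

Lemma meet_set2 (T : finType) (A : {set T}) x y :
  ~~ [disjoint A & [set x; y]] = (x \in A) || (y \in A).
Proof.
by rewrite disjoint_sym disjoints_subset subUset !sub1set !inE negb_and !negbK.
Qed.

Section EdgesOfCompleteGraph.
Variable n : nat.
Implicit Types (a b c d e : edgeK n) (x y : 'I_n).

Lemma edgeK_card e : #|val e| = 2.
Proof. exact/eqP/(valP e). Qed.

Lemma edgeK_exists x y : x != y -> exists e, val e = [set x; y].
Proof.
move=> xy; have xy_card : #|[set x; y]| == 2 by rewrite cards2 xy.
by exists (exist (fun A : {set 'I_n} => #|A| == 2) _ xy_card).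
Qed.

Lemma edgeK_valE e x y :
  x != y -> x \in val e -> y \in val e -> val e = [set x; y].
Proof.
move=> xy xe ye; apply/eqP; rewrite eq_sym eqEcard edgeK_card cards2 xy andbT.
by apply/subsetP=> z; rewrite !inE => /orP[] /eqP ->.
Qed.

Lemma edgeK_eq a b x y : x != y ->
  x \in val a -> y \in val a -> x \in val b -> y \in val b -> a = b.
Proof.
move=> xy xa ya xb yb.
by apply: val_inj; rewrite (edgeK_valE xy xa ya) (edgeK_valE xy xb yb).
Qed.

Lemma edgeK_other e x : x \in val e -> exists2 y, y != x & val e = [set x; y].
Proof.
have /cards2P[a [b [ab ->]]] := valP e.
rewrite !inE => /orP[] /eqP ->; first by exists b; rewrite // eq_sym.
by exists a; rewrite // setUC.
Qed.

Lemma lineK_adj_irr e : lineK_adj e e = false.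
Proof. by rewrite /lineK_adj eqxx. Qed.

Lemma lineK_adj_common a b x :
  x \in val a -> x \in val b -> a != b -> lineK_adj a b.
Proof.
move=> xa xb ab; rewrite /lineK_adj ab -setI_eq0; apply/set0Pn.
by exists x; rewrite inE xa.
Qed.

Lemma lineK_adj_meet a b : lineK_adj a b -> ~~ [disjoint val a & val b].
Proof. by case/andP. Qed.

Lemma card_edgeK_disjointU a b :
  [disjoint val a & val b] -> #|val a :|: val b| = 4.
Proof. by move=> ab; rewrite cardsU disjoint_setI0 // cards0 !edgeK_card. Qed.

Definition star x := [set e : edgeK n | x \in val e].

Lemma card_star x : #|star x| = n.-1.
Proof.
have val_star : val @: star x = (fun y => [set x; y]) @: [set~ x].
  apply/setP=> A; apply/imsetP/imsetP=> [[e + ->] | [y + ->]]; rewrite !inE.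
    by move=> /edgeK_other[y yx ->]; exists y; rewrite // !inE.
  rewrite eq_sym => /edgeK_exists[e eE].
  by exists e; rewrite // inE eE setU11.
rewrite -(card_imset _ val_inj) val_star card_in_imset ?cardsC1 ?card_ord //.
move=> y z; rewrite !inE => yx _ xy_xz.
by have := set22 x y; rewrite xy_xz !inE (negbTE yx) => /eqP.
Qed.

Lemma lineK_clique_star (K : {set edgeK n}) :
  {in K &, forall a b, a != b -> lineK_adj a b} -> 3 < #|K| ->
  exists w, K \subset star w.
Proof.
move=> K_clique K_big.
have K_meet d e x y :
    d \in K -> e \in K -> val e = [set x; y] -> (x \in val d) || (y \in val d).
  move=> dK eK eE; rewrite -meet_set2 -eE.
  have [<- | de] := eqVneq d e; last exact/lineK_adj_meet/K_clique.
  by rewrite -setI_eq0 setIid -card_gt0 edgeK_card.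
have on_pair d e x y :
    val e = [set x; y] -> x != y -> x \in val d -> y \in val d -> d = e.
  by move=> eE xy xd yd; apply: val_inj; rewrite eE; apply: edgeK_valE.
have [a aK] : exists a, a \in K.
  by apply/set0Pn; rewrite -card_gt0 (ltn_trans _ K_big).
have /cards2P[p [q [pq aE]]] := valP a.
have [|/subsetPn[b bK]] := boolP (K \subset star p); first by exists p.
have [|/subsetPn[c cK]] := boolP (K \subset star q); first by exists q.
rewrite !inE => qc pb.
have qb : q \in val b by have := K_meet b a p q bK aK aE; rewrite (negbTE pb).
have pc : p \in val c by have := K_meet c a p q cK aK aE; rewrite (negbTE qc) orbF.
have [r rq bE] := edgeK_other qb.
have rc : r \in val c by have := K_meet c b q r cK bK bE; rewrite (negbTE qc).
have pr : p != r by apply: contraNneq pb => ->; rewrite bE set22.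
have cE := edgeK_valE pr pc rc.
(* [a], [b], [c] are the sides of the triangle pqr, and an edge meeting all
   three sides is one of them. *)
have K_abc : K \subset [:: a; b; c].
  apply/subsetP=> d dK; rewrite !inE.
  have [pd | pd] := boolP (p \in val d).
    have [qd | qd] := boolP (q \in val d); first by rewrite (on_pair d a p q) ?eqxx.
    have rd : r \in val d by have := K_meet d b q r dK bK bE; rewrite (negbTE qd).
    by rewrite (on_pair d c p r) ?eqxx ?orbT.
  have qd : q \in val d by have := K_meet d a p q dK aK aE; rewrite (negbTE pd).
  have rd : r \in val d by have := K_meet d c p r dK cK cE; rewrite (negbTE pd).
  by rewrite (on_pair d b q r) ?eqxx ?orbT // eq_sym.
by have := leq_trans (subset_leq_card K_abc) (card_size _); rewrite leqNgt K_big.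
Qed.

Lemma odd_lineK_matching_uncovered (M : {set edgeK n}) : odd n ->
  {in M &, forall a b, a != b -> [disjoint val a & val b]} ->
  exists x, [disjoint M & star x].
Proof.
move=> n_odd M_matching.
have [/existsP // | /existsPn M_cover] := boolP [exists x, [disjoint M & star x]].
have P_triv : trivIset (val @: M).
  apply/trivIsetP=> _ _ /imsetP[a aM ->] /imsetP[b bM ->] ab.
  by apply: M_matching aM bM _; apply: contraNneq ab => ->.
have P_cover : cover (val @: M) = [set: 'I_n].
  apply/eqP; rewrite eqEsubset subsetT; apply/subsetP=> x _.
  have := M_cover x; rewrite -setI_eq0 => /set0Pn[e]; rewrite !inE => /andP[eM xe].
  by apply/bigcupP; exists (val e); rewrite // imset_f.
suff : ~~ odd n by rewrite n_odd.
move: P_triv; rewrite /trivIset P_cover cardsT card_ord => /eqP <-.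
rewrite (eq_bigr (fun=> 2)) ?sum_nat_const ?oddM ?andbF //.
by move=> _ /imsetP[e _ ->]; apply: edgeK_card.
Qed.

End EdgesOfCompleteGraph.

Section LineKEndomorphism.
Variables (n : nat) (f : edgeK n -> edgeK n).
Hypothesis f_endo : is_endomorphism (@lineK_adj n) f.
Implicit Types (a b e : edgeK n) (u v x : 'I_n).

Lemma endo_lineK_neq a b : lineK_adj a b -> f a != f b.
Proof. by move/f_endo; apply: contraTneq => ->; rewrite lineK_adj_irr. Qed.

Lemma endo_lineK_fiber_disjoint a b :
  a != b -> f a = f b -> [disjoint val a & val b].
Proof.
move=> ab fab; apply: contraT => ab_meet.
have ab_adj : lineK_adj a b by rewrite /lineK_adj ab.
by have := endo_lineK_neq ab_adj; rewrite fab eqxx.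
Qed.

Lemma endo_lineK_inj_star x : {in star x &, injective f}.
Proof.
move=> a b; rewrite !inE => xa xb fab; apply: contraTeq isT => ab.
by have := endo_lineK_neq (lineK_adj_common xa xb ab); rewrite fab eqxx.
Qed.

Hypothesis n_gt4 : 4 < n.

Lemma endo_lineK_star_image x : exists w, f @: star x = star w.
Proof.
have card_fstar : #|f @: star x| = n.-1.
  by rewrite card_in_imset ?card_star //; apply: endo_lineK_inj_star.
have [||w fstar_sub] := @lineK_clique_star _ (f @: star x).
- move=> _ _ /imsetP[a + ->] /imsetP[b + ->]; rewrite !inE => xa xb fab.
  by apply/f_endo/(lineK_adj_common xa xb); apply: contraNneq fab => ->.
- by rewrite card_fstar -ltnS prednK ?(leq_trans _ n_gt4).
by exists w; apply/eqP; rewrite eqEcard fstar_sub card_fstar card_star leqnn.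
Qed.

Definition star_image x := odflt x [pick w | f @: star x == star w].

Lemma star_imageE x : f @: star x = star (star_image x).
Proof.
rewrite /star_image; case: pickP => [w /eqP // | no_w].
by have [w fstar] := endo_lineK_star_image x; have := no_w w; rewrite fstar eqxx.
Qed.

Lemma star_image_mem x e : x \in val e -> star_image x \in val (f e).
Proof.
move=> xe; have : f e \in f @: star x by rewrite imset_f // inE.
by rewrite star_imageE inE.
Qed.

Lemma star_image_collapse u v x :
  u != v -> star_image u = star_image v -> star_image x = star_image u.
Proof.
move=> uv suv; have [-> // | xu] := eqVneq x u.
have [-> | xv] := eqVneq x v; first by rewrite suv.
apply/eqP; apply: contraT => sxu.
have [p pE] := edgeK_exists xu; have [q qE] := edgeK_exists xv.
have [xp up] : x \in val p /\ u \in val p by rewrite pE set21 set22.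
have [xq vq] : x \in val q /\ v \in val q by rewrite qE set21 set22.
have pq : p != q.
  apply: contraNneq uv => pq; move: up.
  by rewrite pq qE !inE eq_sym (negbTE xu).
have fpq : f p = f q.
  apply: (edgeK_eq sxu (star_image_mem xp) (star_image_mem up) (star_image_mem xq)).
  by rewrite suv star_image_mem.
by have := endo_lineK_neq (lineK_adj_common xp xq pq); rewrite fpq eqxx.
Qed.

Lemma star_image_noninjective a b :
  a != b -> f a = f b -> ~~ injectiveb star_image.
Proof.
move=> ab fab; apply/injectiveP => s_inj.
have s_sub : star_image @: (val a :|: val b) \subset val (f a).
  apply/subsetP=> _ /imsetP[x + ->]; rewrite inE => /orP[xa | xb].
    exact: star_image_mem.
  by rewrite fab star_image_mem.
have := subset_leq_card s_sub.
by rewrite card_imset // card_edgeK_disjointU ?edgeK_card ?endo_lineK_fiber_disjoint.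
Qed.

Lemma endo_lineK_fiber_meets_star e x :
  ~~ injectiveb star_image -> ~~ [disjoint f @^-1: [set f e] & star x].
Proof.
move=> /injectivePn[u [v uv suv]].
have [y ye] : exists y, y \in val e by apply/set0Pn; rewrite -card_gt0 edgeK_card.
have : f e \in f @: star x.
  rewrite star_imageE inE (star_image_collapse x uv suv).
  by rewrite -(star_image_collapse y uv suv) star_image_mem.
case/imsetP=> d xd fde; rewrite -setI_eq0; apply/set0Pn.
by exists d; rewrite inE xd andbT inE -fde set11.
Qed.

End LineKEndomorphism.

Lemma odd_lineK_endomorphism_injective n (f : edgeK n -> edgeK n) :
  odd n -> is_endomorphism (@lineK_adj n) f -> injective f.
Proof.
move=> n_odd f_endo a b fab; apply: contraTeq isT => ab.
have ab_disj := endo_lineK_fiber_disjoint f_endo ab fab.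
have n_gt4 : 4 < n.
  have n_ge4 : 4 <= n.
    by rewrite -(card_edgeK_disjointU ab_disj) -[n in _ <= n]card_ord max_card.
  by rewrite ltn_neqAle n_ge4 andbT; apply: contraTneq n_odd => <-.
have s_noninj := star_image_noninjective f_endo n_gt4 ab fab.
have fiber_matching :
    {in f @^-1: [set f a] &, forall d e : edgeK n, d != e -> [disjoint val d & val e]}.
  move=> d e; rewrite !inE => /eqP fd /eqP fe de.
  by apply: (endo_lineK_fiber_disjoint (f := f) f_endo de); rewrite fd fe.
have [x] := odd_lineK_matching_uncovered n_odd fiber_matching.
by rewrite (negbTE (endo_lineK_fiber_meets_star f_endo n_gt4 a x s_noninj)).
Qed.

Lemma odd_lineK_core n : odd n -> is_core (@lineK_adj n).
Proof.
move=> n_odd f f_endo.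
have f_inj := odd_lineK_endomorphism_injective n_odd f_endo.
exact: inj_endomorphism_automorphism f_endo f_inj.
Qed.

Theorem mainTheorem7 (m : nat) (hm : 0 < m) :
  is_core (@lineK_adj (2 * m + 1)).
Proof.
by apply: odd_lineK_core; rewrite oddD oddM.
Qed.
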